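(* Let $X$ be a quasigeodesic metric space (e.g.\ a connected graph with its path metric) which is not coarsely equivalent to any metric space with bounded geometry. Then $h_\infty(X)=\infty$.
   Context: $X$ is quasigeodesic if there are $C\ge1,A\ge0$ such that any $x,x'$ are joined by a map $p\colon[0,d(x,x')]\to X$, $p(0)=x$, $p(d(x,x'))=x'$, with $C^{-1}|s-t|-A\le d(p(s),p(t))\le C|s-t|+A$. Bounded geometry: for every $r>0$ closed balls of radius $r$ have uniformly bounded cardinality. Coarse equivalence: a map $f$ with nondecreasing $\rho_\pm\colon[0,\infty)\to\mathbb R$, $\rho_-(r)\to\infty$, $\rho_-(d(x,x'))\le d(f(x),f(x'))\le\rho_+(d(x,x'))$, and coarsely dense image. Coarse entropy $h_\infty(X)=\lim_{\delta\to\infty}\lim_{R\to\infty}\limsup_{n\to\infty}\frac1n\log s(n,R,\delta,x_0)$, where $s(n,R,\delta,x_0)$ is the supremum of cardinalities of $R$-separated sets of $\delta$-paths $(x_0,\dots,x_n)$ ($d(x_i,x_{i+1})\le\delta$) starting at $x_0$, paths compared by $\max_i d(x_i,y_i)$. *)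

From HB Require Import structures.
From mathcomp Require Import all_boot all_order all_algebra.
From mathcomp Require Import all_classical all_reals all_analysis.
Set Implicit Arguments. Unset Strict Implicit. Unset Printing Implicit Defensive.
Import Order.TTheory GRing.Theory Num.Theory.
Import numFieldNormedType.Exports.
Local Open Scope classical_set_scope.
Local Open Scope ring_scope.

Section Defs.
Variable R : realType.

Definition is_metric (X : Type) (d : X -> X -> R) : Prop :=
  [/\ forall x y, 0 <= d x y,
      forall x y, d x y = 0 <-> x = y,
      forall x y, d x y = d y x &
      forall x y z, d x z <= d x y + d y z].

Definition quasigeodesic (X : Type) (d : X -> X -> R) : Prop :=
  exists C A : R, 1 <= C /\ 0 <= A /\
    forall x x' : X, exists p : R -> X,
      p 0 = x /\ p (d x x') = x' /\
      forall s t, 0 <= s <= d x x' -> 0 <= t <= d x x' ->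
        C^-1 * `|s - t| - A <= d (p s) (p t) <= C * `|s - t| + A.

Definition ball_card_le (X : Type) (d : X -> X -> R) (x : X) (r : R) (N : nat) :=
  forall (k : nat) (f : 'I_k -> X), injective f ->
    (forall i, d x (f i) <= r) -> (k <= N)%N.

Definition bounded_geometry (X : Type) (d : X -> X -> R) : Prop :=
  forall r : R, 0 < r -> exists N : nat, forall x : X, ball_card_le d x r N.

Definition nondecreasing_on_nonneg (rho : R -> R) : Prop :=
  forall a b, 0 <= a -> a <= b -> rho a <= rho b.

Definition coarse_equivalence (X Y : Type) (d : X -> X -> R) (e : Y -> Y -> R)
  (f : X -> Y) : Prop :=
  (exists rho_m rho_p : R -> R,
     [/\ nondecreasing_on_nonneg rho_m, nondecreasing_on_nonneg rho_p,
         rho_m x @[x --> +oo] --> +oo &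
         forall x x', rho_m (d x x') <= e (f x) (f x') <= rho_p (d x x')])
  /\ (exists K : R, forall y : Y, exists x : X, e y (f x) <= K).

Definition delta_path (X : Type) (d : X -> X -> R) (n : nat) (delta : R)
  (x0 : X) (p : 'I_n.+1 -> X) : Prop :=
  p ord0 = x0 /\ forall i : 'I_n, d (p (widen_ord (leqnSn n) i)) (p (lift ord0 i)) <= delta.

Definition path_dist (X : Type) (d : X -> X -> R) (n : nat) (p q : 'I_n.+1 -> X) : R :=
  \big[Num.max/0]_(i < n.+1) d (p i) (q i).

Definition sep_number (X : Type) (d : X -> X -> R) (n : nat) (Rr delta : R) (x0 : X)
  : \bar R :=
  ereal_sup [set (k%:R)%:E | k in [set k : nat | exists P : 'I_k -> ('I_n.+1 -> X),
      [/\ injective P, forall j, delta_path d delta x0 (P j) &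
          forall j j', j != j' -> Rr <= path_dist d (P j) (P j')]]].

Definition elog (x : \bar R) : \bar R :=
  match x with
  | EFin r => (ln r)%:E
  | +oo%E => +oo%E
  | -oo%E => -oo%E
  end.

Definition coarse_entropy (X : Type) (d : X -> X -> R) (x0 : X) : \bar R :=
  lim ((lim ((limn_esup (fun n : nat =>
            ((n%:R)^-1)%:E * elog (sep_number d n Rr delta x0)))%E
          @[Rr --> +oo])) @[delta --> +oo]).

End Defs.

From HB Require Import structures.
From mathcomp Require Import all_boot all_order all_algebra.
From mathcomp Require Import all_classical all_reals all_analysis.
From mathcomp Require Import lra zify.
Import Order.TTheory GRing.Theory Num.Theory.
Local Open Scope ring_scope.
Local Open Scope classical_set_scope.
Set Implicit Arguments.
Unset Strict Implicit.

(* Fix r > 0. A maximal r-separated net of X is coarsely equivalent to X, so it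
   fails bounded geometry: for some rho, balls of radius rho contain arbitrarily
   many, say M, pairwise r-separated points. Sampled quasigeodesics join any two
   points by chains of bounded step whose length is about their distance, so a
   delta-path of length n can visit these points in any prescribed order,
   spending h ~ 2 rho steps per visit. The M ^ (n / h) resulting paths are
   pairwise r-separated, so s(n, r, delta, x0) grows at exponential rate at
   least log M / (2 h), for every M. *)

Definition separated {R : realType} {X : Type} (d : X -> X -> R) (r : R) (N : set X)
    : Prop :=
  forall a b, N a -> N b -> a <> b -> r <= d a b.

Section Metric.
Variables (R : realType) (X : Type) (d : X -> X -> R).
Hypothesis dm : is_metric d.

Lemma metric_ge0 x y : 0 <= d x y. Proof. by case: dm. Qed.
Lemma metric_eq0 x y : d x y = 0 <-> x = y. Proof. by case: dm. Qed.
Lemma metric_xx x : d x x = 0. Proof. exact/metric_eq0. Qed.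
Lemma metric_sym x y : d x y = d y x. Proof. by case: dm. Qed.
Lemma metric_triangle x y z : d x z <= d x y + d y z. Proof. by case: dm. Qed.

Lemma is_metric_comp (Y : Type) (f : Y -> X) :
  injective f -> is_metric (fun a b => d (f a) (f b)).
Proof.
move=> finj; split=> [a b|a b|a b|a b c].
- exact: metric_ge0.
- by split=> [/metric_eq0/finj|->]; rewrite ?metric_xx.
- exact: metric_sym.
- exact: metric_triangle.
Qed.

Lemma separated_net_exists (r : R) : 0 < r ->
  exists N : set X, separated d r N /\ forall x, exists2 y, N y & d x y < r.
Proof.
move=> r0.
have [N [sepN maxN]] : exists N, separated d r N /\ forall N', N `<` N' -> ~ separated d r N'.
  apply: Zorn_bigcup => F Fsep Ftot a b [A FA Aa] [B FB Bb].
  have [/(_ a Aa) Ba|/(_ b Bb) Ab] := Ftot A B FA FB.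
  - exact: Fsep B FB a b Ba Bb.
  - exact: Fsep A FA a b Aa Ab.
exists N; split => // x; apply: contrapT => xfar.
have farx y : N y -> r <= d x y.
  by move=> Ny; rewrite leNgt; apply/negP => lt; apply: xfar; exists y.
have Nx : ~ N x by move=> /farx; rewrite metric_xx leNgt r0.
apply: (maxN (N `|` [set x])).
- by split=> [y Ny|/(_ x (or_intror erefl))]; [left|].
- move=> a b [Na|->] [Nb|->] ab; [exact: sepN| |exact: farx|by []].
  by rewrite metric_sym; apply: farx.
Qed.

Lemma projection_coarse_equivalence (N : set X) (r : R) (g : X -> {x | N x}) :
  (forall x, d x (sval (g x)) <= r) ->
  coarse_equivalence d (fun a b => d (sval a) (sval b)) g.
Proof.
move=> gr; split; last by exists r => y; exists (sval y); apply: gr.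
exists (fun t => t - 2 * r), (fun t => t + 2 * r); split.
- by move=> a b _ ab; rewrite lerD2r.
- by move=> a b _ ab; rewrite lerD2r.
- apply/cvgryPge => B; near=> t; rewrite lerBrDr; near: t.
  exact/nbhs_pinfty_ge/num_real.
- move=> x x'; apply/andP; split; have := gr x; have := gr x'.
  + have := metric_triangle x (sval (g x)) x'.
    have := metric_triangle (sval (g x)) (sval (g x')) x'.
    rewrite (metric_sym (sval (g x')) x'); lra.
  + have := metric_triangle (sval (g x)) x (sval (g x')).
    have := metric_triangle x x' (sval (g x')).
    rewrite (metric_sym (sval (g x)) x); lra.
Unshelve. all: by end_near.
Qed.

End Metric.

Lemma not_bounded_geometry (R : realType) (Y : Type) (e : Y -> Y -> R) :
  ~ bounded_geometry e -> exists rho : R,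
    forall M, exists y (z : 'I_M -> Y), injective z /\ forall i, e y (z i) <= rho.
Proof.
move=> /existsNP[rho /not_implyP[_ /forallNP unbounded]]; exists rho => M.
have /existsNP[y /existsNP[k /existsNP[f]]] := unbounded M.
move=> /not_implyP[finj /not_implyP[fball /negP]]; rewrite -ltnNge => Mk.
exists y, (f \o widen_ord (ltnW Mk)); split=> [i j /finj eq_ij|i]; last exact: fball.
by apply/val_inj; move: eq_ij => /(congr1 val).
Qed.

Section Separation.
Variables (R : realType) (X : Type) (d : X -> X -> R).
Hypothesis dm : is_metric d.

Lemma large_separated_sets_in_balls (r : R) :
  (forall (Y : Type) (e : Y -> Y -> R), is_metric e -> bounded_geometry e ->
     forall f : X -> Y, ~ coarse_equivalence d e f) ->
  0 < r -> exists rho : R, forall M : nat,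
    exists (x : X) (z : 'I_M -> X), (forall i, d x (z i) <= rho) /\
      (forall i j, i != j -> r <= d (z i) (z j)).
Proof.
move=> not_bg r0; have [N [sepN denseN]] := separated_net_exists dm r0.
have /choice[g gP] : forall x, exists y : {y | N y}, d x (sval y) <= r.
  by move=> x; have [y Ny /ltW] := denseN x; exists (exist _ y Ny).
have sval_inj : injective (@sval X N) by move=> [a Na] [b Nb] /= ab; apply: eq_exist.
have eN := is_metric_comp dm sval_inj.
have not_bgN : ~ bounded_geometry (fun a b : {y | N y} => d (sval a) (sval b)).
  by move=> bg; apply: (not_bg _ _ eN bg g); apply: projection_coarse_equivalence gP.
have [rho clusters] := not_bounded_geometry not_bgN.
exists rho => M; have [y [z [zinj zball]]] := clusters M.
exists (sval y), (sval \o z); split=> // i j ij.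
apply: sepN; try exact: svalP.
by move=> /sval_inj/zinj/eqP; rewrite (negbTE ij).
Qed.

Lemma path_dist_ge (n : nat) (p q : 'I_n.+1 -> X) i : d (p i) (q i) <= path_dist d p q.
Proof. exact: le_bigmax. Qed.

Lemma path_dist_xx (n : nat) (p : 'I_n.+1 -> X) : path_dist d p p = 0.
Proof.
apply/le_anti/andP; split; first by apply/bigmax_leP; split=> // i _; rewrite metric_xx.
by apply: le_trans (path_dist_ge p p ord0); apply: metric_ge0.
Qed.

Lemma sep_number_ge (n K : nat) (Rr delta : R) (x0 : X) (P : 'I_K -> 'I_n.+1 -> X) :
  0 < Rr -> (forall j, delta_path d delta x0 (P j)) ->
  (forall j j', j != j' -> Rr <= path_dist d (P j) (P j')) ->
  ((K%:R)%:E <= sep_number d n Rr delta x0)%E.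
Proof.
move=> Rr0 P_delta P_sep; apply: ereal_sup_ubound; exists K => //; exists P.
split=> // j j' Pjj'; apply/eqP; apply: contraT => /P_sep.
by rewrite Pjj' path_dist_xx leNgt Rr0.
Qed.

End Separation.

Definition chain_family {R : realType} {X : Type} (d : X -> X -> R) (delta : R)
    (c : X -> X -> nat -> X) : Prop :=
  forall a b, [/\ c a b 0 = a, forall t, d a b <= t%:R -> c a b t = b &
                  forall t, d (c a b t) (c a b t.+1) <= delta].

Section Chains.
Variables (R : realType) (X : Type) (d : X -> X -> R).
Hypothesis dm : is_metric d.

Lemma chain_familyW (delta delta' : R) (c : X -> X -> nat -> X) :
  delta <= delta' -> chain_family d delta c -> chain_family d delta' c.
Proof.
move=> le_delta cc a b; have [c0 cend cstep] := cc a b.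
by split=> // t; apply: le_trans le_delta.
Qed.

(* Sampling a quasigeodesic at integer times, frozen at its endpoint. *)
Lemma quasigeodesic_chain_family :
  quasigeodesic d -> exists delta (c : X -> X -> nat -> X), chain_family d delta c.
Proof.
move=> [C [A [C1 [A0 qgeo]]]].
have [q qP] := choice (fun ab : X * X => qgeo ab.1 ab.2).
exists (C + A), (fun a b t => q (a, b) (Num.min t%:R (d a b))) => a b.
have [q0 [qend qlip]] := qP (a, b); have dab0 := metric_ge0 dm a b.
have in_dom (s : R) : 0 <= s -> 0 <= Num.min s (d a b) <= d a b.
  by move=> s0; rewrite le_min s0 dab0 ge_min lexx orbT.
split=> [|t tab|t]; first by rewrite min_l ?q0.
- by rewrite min_r ?qend.
- have /andP[_ qt] := qlip _ _ (in_dom _ (ler0n R t)) (in_dom _ (ler0n R t.+1)).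
  apply: le_trans qt _; rewrite lerD2r -[leRHS]mulr1 ler_wpM2l ?(le_trans ler01) //.
  rewrite -natr1; have [h1|h1] := leP (t%:R) (d a b);
    have [h2|h2] := leP (t%:R + 1) (d a b); rewrite ler_norml; apply/andP; split; lra.
Qed.

End Chains.

Lemma modn_succ_dvd (t h : nat) : (0 < h)%N -> (h %| t.+1)%N -> ((t %% h).+1 = h)%N.
Proof.
move=> h0 dvd_h; apply/anti_leq; rewrite ltn_pmod //=; apply: dvdn_leq => //.
by move: dvd_h; rewrite {1}(divn_eq t h) -addnS dvdn_addr // dvdn_mull.
Qed.

Section Tours.
Variables (R : realType) (X : Type) (d : X -> X -> R).
Hypothesis dm : is_metric d.
Variables (delta : R) (c : X -> X -> nat -> X).
Hypothesis cc : chain_family d delta c.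
Variables (x0 : X) (M T0 h k : nat) (z : 'I_M.+1 -> X).
Hypotheses (h_gt0 : (0 < h)%N) (x0_z : d x0 (z ord0) <= T0%:R)
  (z_diam : forall i j, d (z i) (z j) <= h%:R).

(* A word [s] of length [k] is followed by walking from [x0] to [z ord0] in
   time [T0], then through [z (s 0)], ..., [z (s (k-1))], [h] steps per leg;
   waypoints past the end of the word default to [z ord0]. *)
Definition waypoint (s : {ffun 'I_k -> 'I_M.+1}) (j : nat) : X :=
  z (if j is j'.+1 then odflt ord0 (omap s (insub j')) else ord0).

Definition leg (s : {ffun 'I_k -> 'I_M.+1}) (t : nat) : X :=
  c (waypoint s (t %/ h)) (waypoint s (t %/ h).+1) (t %% h)%N.

Definition tour (s : {ffun 'I_k -> 'I_M.+1}) (t : nat) : X :=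
  if (t <= T0)%N then c x0 (z ord0) t else leg s (t - T0).

Lemma tour0 s : tour s 0 = x0.
Proof. by rewrite /tour; have [] := cc x0 (z ord0). Qed.

Lemma tour_late s t : (T0 <= t)%N -> tour s t = leg s (t - T0).
Proof.
rewrite /tour leq_eqVlt => /orP[/eqP<-|]; last by rewrite ltnNge => /negbTE->.
rewrite leqnn subnn /leg div0n mod0n.
have [_ cend _] := cc x0 (z ord0); rewrite cend //.
by have [-> _ _] := cc (waypoint s 0) (waypoint s 1).
Qed.

Lemma leg_step s t : d (leg s t) (leg s t.+1) <= delta.
Proof.
rewrite /leg (div.divnS t h_gt0) (div.modnS t h).
have [_ _ step] := cc (waypoint s (t %/ h)) (waypoint s (t %/ h).+1).
case: ifP => [dvd_h|_]; last exact: step.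
have [-> _ _] := cc (waypoint s (t %/ h).+1) (waypoint s (t %/ h).+2).
have [_ cend _] := cc (waypoint s (t %/ h)) (waypoint s (t %/ h).+1).
rewrite -[X in d _ X](cend (t %% h).+1%N); first exact: step.
by rewrite modn_succ_dvd //; apply: z_diam.
Qed.

Lemma tour_step s t : d (tour s t) (tour s t.+1) <= delta.
Proof.
have [tT0|T0t] := leqP t.+1 T0.
  by rewrite /tour tT0 (ltnW tT0); have [_ _] := cc x0 (z ord0).
by rewrite !tour_late ?subSn ?leg_step // ltnW.
Qed.

Lemma tour_letter s (a : 'I_k) : tour s (T0 + a.+1 * h) = z (s a).
Proof.
rewrite tour_late ?leq_addr // addKn /leg mulnK // modnMl.
by have [-> _ _] := cc (waypoint s a.+1) (waypoint s a.+2); rewrite /waypoint valK.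
Qed.

Lemma sep_number_ge_words (n : nat) (Rr : R) :
  0 < Rr -> (forall i j, i != j -> Rr <= d (z i) (z j)) -> (T0 + k * h <= n)%N ->
  (((M.+1 ^ k)%:R)%:E <= sep_number d n Rr delta x0)%E.
Proof.
move=> Rr0 z_sep kh_n.
have card_words : (M.+1 ^ k = #|{ffun 'I_k -> 'I_M.+1}|)%N.
  by rewrite card_ffun !card_ord.
pose word (i : 'I_(M.+1 ^ k)) := enum_val (cast_ord card_words i).
have word_inj : injective word by move=> i j /enum_val_inj /cast_ord_inj.
apply: (sep_number_ge dm (P := fun i (t : 'I_n.+1) => tour (word i) t)) => // [i|i j ij].
  by split=> [|t]; rewrite ?tour0 //; apply: tour_step.
have /existsP[a word_ij] : [exists a, word i a != word j a].
  apply: contraNT ij => /existsPn same; apply/eqP/word_inj/ffunP => a.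
  exact/eqP/negPn/same.
have a_n : (T0 + a.+1 * h < n.+1)%N.
  by rewrite ltnS (leq_trans _ kh_n) // leq_add2l leq_mul2r ltn_ord orbT.
apply: le_trans (path_dist_ge d _ _ (Ordinal a_n)).
by rewrite /= !tour_letter; apply: z_sep.
Qed.

End Tours.

Lemma ln_le_elog (R : realType) (x : R) (s : \bar R) :
  0 < x -> (x%:E <= s)%E -> ((ln x)%:E <= elog s)%E.
Proof.
move=> x0; case: s => [r| |] xs /=; [|exact: leey|by rewrite leeNy_eq in xs].
have r0 : 0 < r by rewrite -lte_fin (lt_le_trans _ xs) ?lte_fin.
by rewrite lee_fin ler_ln ?posrE // -lee_fin.
Qed.

Lemma whole_legs_fit (n T0 h : nat) : (0 < h)%N -> (2 * (T0 + h) < n)%N ->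
  (T0 + (n - T0) %/ h * h <= n)%N /\ (n <= 2 * ((n - T0) %/ h * h))%N.
Proof.
move=> h0 n_big; have := divn_eq (n - T0) h; have := ltn_pmod (n - T0) h0.
by move: ((n - T0) %/ h * h)%N ((n - T0) %% h)%N => m r; lia.
Qed.

Section Entropy.
Variables (R : realType) (X : Type) (d : X -> X -> R).
Hypothesis dm : is_metric d.
Hypothesis not_bg : forall (Y : Type) (e : Y -> Y -> R), is_metric e ->
  bounded_geometry e -> forall f : X -> Y, ~ coarse_equivalence d e f.

Lemma limn_esup_entropy_rate (x0 : X) (delta Rr : R) (c : X -> X -> nat -> X) :
  chain_family d delta c -> 0 < Rr ->
  limn_esup (fun n : nat =>
    ((n%:R)^-1)%:E * elog (sep_number d n Rr delta x0))%E = +oo%E.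
Proof.
move=> cc Rr0; set u := fun n : nat => _.
suff : u n @[n --> \oo] --> +oo%E by move/cvg_limn_einf_sup => [_ ->].
apply/cvgeyPge => B; pose B1 := Num.max B 1.
have [rho clusters] := large_separated_sets_in_balls dm not_bg Rr0.
pose h := (Num.truncn (2 * rho)).+1; have h_rho : 2 * rho < h%:R := truncnS_gt _.
pose M := Num.truncn (expR (2 * h%:R * B1)).
have [x [z [z_x z_sep]]] := clusters M.+1.
have z_diam i j : d (z i) (z j) <= h%:R.
  have := metric_triangle dm (z i) x (z j); rewrite (metric_sym dm (z i) x).
  by have := z_x i; have := z_x j; lra.
pose T0 := (Num.truncn (d x0 (z ord0))).+1.
have x0_z : d x0 (z ord0) <= T0%:R := ltW (truncnS_gt _).
exists (2 * (T0 + h)).+1 => // n /= n_big.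
have [kh_n n_kh] := whole_legs_fit (ltn0Sn _) n_big.
have words := sep_number_ge_words dm cc (ltn0Sn _) x0_z z_diam Rr0 z_sep kh_n.
set k := ((n - T0) %/ h)%N in n_kh words.
have n_pos : (0 < n)%N by lia.
have Mk_pos : (0 : R) < (M.+1 ^ k)%:R by rewrite ltr0n expn_gt0.
have n_inv : (0 <= (n%:R^-1)%:E :> \bar R)%E by rewrite lee_fin invr_ge0.
apply: le_trans (lee_wpmul2l n_inv (ln_le_elog Mk_pos words)).
rewrite -EFinM lee_fin natrX lnXn // ler_pdivlMl ?ltr0n // -mulr_natr.
have lnM : 2 * h%:R * B1 <= ln M.+1%:R.
  by rewrite -[leLHS]expRK ler_ln ?posrE ?expR_gt0 // ltW // truncnS_gt.
have : (n%:R : R) <= 2 * (k%:R * h%:R) by rewrite -!natrM ler_nat.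
have : B <= B1 /\ 1 <= B1 by split; rewrite /B1 le_max lexx ?orbT.
have : (0 : R) <= k%:R /\ (0 : R) <= n%:R by [].
nra.
Qed.

End Entropy.

Unset Implicit Arguments.

Theorem mainTheorem19 (R : realType) (X : Type) (d : X -> X -> R) :
  is_metric d -> quasigeodesic d ->
  (forall (Y : Type) (e : Y -> Y -> R), is_metric e -> bounded_geometry e ->
     forall f : X -> Y, ~ coarse_equivalence d e f) ->
  forall x0 : X, coarse_entropy d x0 = +oo%E.
Proof.
move=> dm qgeo not_bg x0.
have [delta0 [c cc]] := quasigeodesic_chain_family dm qgeo.
apply: (lim_near_cst (@ereal_hausdorff R)); near=> delta.
apply: (lim_near_cst (@ereal_hausdorff R)); near=> Rr.
apply: (limn_esup_entropy_rate dm not_bg x0 (chain_familyW _ cc)).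
- near: delta; exact/nbhs_pinfty_ge/num_real.
- near: Rr; exact/nbhs_pinfty_gt/num_real.
Unshelve. all: by end_near.
Qed.
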